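(* Let $p$ be a prime, let $n\geq 3$, and let $L$ be a nilpotent Lie ring of order $p^{n}$ and nilpotency class $n-1$. Then $pL\leq L^{n-1}$, where $pL=\{pa\mid a\in L\}$.
   Context: A Lie ring is an abelian group with a bilinear, alternating product (written $ab$) satisfying the Jacobi identity; its order is the order of the underlying additive group. The lower central series is $L^{1}=L$, $L^{2}=\langle ab\mid a,b\in L\rangle$ and for $i>2$, $L^{i}=\langle ab\mid a\in L^{i-1},\,b\in L\rangle$ (additive subgroups generated by these products). $L$ has nilpotency class $c$ if $L^{c+1}=\{0\}$ and $L^{c}\neq\{0\}$. *)

From HB Require Import structures.
From mathcomp Require Import all_boot all_order all_algebra.
Set Implicit Arguments. Unset Strict Implicit. Unset Printing Implicit Defensive.
Import GRing.Theory.
Local Open Scope ring_scope.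

Definition is_lie_bracket (V : zmodType) (br : V -> V -> V) : Prop :=
  [/\ (forall a b c, br (a + b) c = br a c + br b c),
      (forall a b c, br a (b + c) = br a b + br a c),
      (forall a, br a a = 0) &
      (forall a b c, br (br a b) c + br (br b c) a + br (br c a) b = 0)].

Inductive add_span (V : zmodType) (S : V -> Prop) : V -> Prop :=
  | add_span_gen x : S x -> add_span S x
  | add_span0 : add_span S 0
  | add_span_sub x y : add_span S x -> add_span S y -> add_span S (x - y).

(* lcs_aux br k = L^(k+1) *)
Fixpoint lcs_aux (V : zmodType) (br : V -> V -> V) (k : nat) : V -> Prop :=
  match k with
  | O => fun _ => True
  | S k' => add_span (fun x => exists a b, lcs_aux br k' a /\ x = br a b)
  end.

(* Lower central series, 1-indexed: L^1 = L, L^i = <ab | a in L^(i-1), b in L>. *)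
Definition lcs (V : zmodType) (br : V -> V -> V) (i : nat) : V -> Prop :=
  lcs_aux br i.-1.

Definition nil_class (V : zmodType) (br : V -> V -> V) (c : nat) : Prop :=
  (forall x, lcs br c.+1 x -> x = 0) /\ (exists x, lcs br c x /\ x <> 0).

From mathcomp Require Import all_boot all_order all_algebra all_fingroup cyclic.
From mathcomp Require Import zify boolp.
Set Implicit Arguments. Unset Strict Implicit. Unset Printing Implicit Defensive.
Import GRing.Theory FinRing.Theory.
Local Open Scope ring_scope.

(* Write L^k for the lower central series, so L^(n-1) <> 0 = L^n.
   Two facts about an ideal I drive everything: if L^k <= I + L^(k+1) then
   L^k <= I (iterate until L^n = 0), and if L = <x> + I + L^2 then
   L^2 <= I + L^3, hence L^2 <= I.  With I = 0 these show that every
   inclusion L^(k+1) < L^k (k < n) is strict and that L/L^2 is not cyclic,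
   so counting gives |L : L^2| = p^2 and |L^k : L^(k+1)| = p for k >= 2.
   In particular pL <= L^2, otherwise L/L^2 would be cyclic.
   Let k be largest with pL <= L^k.  If k < n-1, index p gives
   L^k = pL + L^(k+1), hence L^k = pL and L^(k+1) = [pL, L] <= p L^2.
   Comparing |L| = |pL| |L[p]| with |L^2| = |pL^2| |L^2[p]| shows that
   L[p] is not contained in L^2, so L = <x> + L[p] + L^2 for some x;
   then L^2 <= L[p], i.e. p L^2 = 0, and L^(k+1) = 0, a contradiction. *)

Section Subgroups.
Variable V : zmodType.
Implicit Types (P Q : V -> Prop) (x y : V).

Definition zmod_sub P := P 0 /\ forall x y, P x -> P y -> P (x - y).
Definition incl P Q := forall x, P x -> Q x.
Definition sum_pred P Q y := exists u w, [/\ P u, Q w & y = u + w].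
Definition zmultiples x y := exists z : int, y = x *~ z.
Definition mulrn_image m P y := exists2 x, P x & y = x *+ m.
Definition mulrn_kernel m P x := P x /\ x *+ m = 0.

Lemma not_incl_ex P Q : ~ incl P Q -> exists2 x, P x & ~ Q x.
Proof. by move=> /existsNP[x /not_implyP[Px nQx]]; exists x. Qed.

Lemma zmod_subN P x : zmod_sub P -> P x -> P (- x).
Proof. by case=> P0 PB Px; rewrite -sub0r; apply: PB. Qed.

Lemma zmod_subD P x y : zmod_sub P -> P x -> P y -> P (x + y).
Proof.
by move=> hP Px Py; rewrite -[y]opprK; apply: hP.2 => //; apply: zmod_subN.
Qed.

Lemma zmod_subMn P x m : zmod_sub P -> P x -> P (x *+ m).
Proof.
move=> hP Px; elim: m => [|m IHm]; first exact: hP.1.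
by rewrite mulrS; apply: zmod_subD.
Qed.

Lemma zmod_subMz P x z : zmod_sub P -> P x -> P (x *~ z).
Proof.
move=> hP Px; case: z => m; first exact: zmod_subMn.
by rewrite NegzE mulrNz; apply: zmod_subN => //; apply: zmod_subMn.
Qed.

Lemma zmod_sub0 : zmod_sub (fun y => y = 0).
Proof. by split=> // x y -> ->; rewrite subrr. Qed.

Lemma zmod_sub_sum P Q : zmod_sub P -> zmod_sub Q -> zmod_sub (sum_pred P Q).
Proof.
move=> hP hQ; split; first by exists 0, 0; rewrite addr0; split; [apply: hP.1 | apply: hQ.1|].
move=> _ _ [u [w [Pu Qw ->]]] [u' [w' [Pu' Qw' ->]]].
by exists (u - u'), (w - w'); rewrite opprD addrACA; split; [apply: hP.2 | apply: hQ.2|].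
Qed.

Lemma sum_predl P Q x : zmod_sub Q -> P x -> sum_pred P Q x.
Proof. by move=> hQ Px; exists x, 0; rewrite addr0; split=> //; apply: hQ.1. Qed.

Lemma sum_predr P Q x : zmod_sub P -> Q x -> sum_pred P Q x.
Proof. by move=> hP Qx; exists 0, x; rewrite add0r; split=> //; apply: hP.1. Qed.

Lemma sum_predS P P' Q Q' :
  incl P P' -> incl Q Q' -> incl (sum_pred P Q) (sum_pred P' Q').
Proof. by move=> sP sQ _ [u [w [Pu Qw ->]]]; exists u, w; split; auto. Qed.

Lemma zmod_sub_zmultiples x : zmod_sub (zmultiples x).
Proof.
split; first by exists 0; rewrite mulr0z.
by move=> _ _ [z ->] [z' ->]; exists (z - z'); rewrite mulrzBr.
Qed.

Lemma zmultiples_id x : zmultiples x x.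
Proof. by exists 1; rewrite mulr1z. Qed.

Lemma zmultiples_mulrn x m : incl (zmultiples (x *+ m)) (zmultiples x).
Proof. by move=> _ [z ->]; exists (m%:Z * z); rewrite mulrzA -pmulrn. Qed.

Lemma zmod_sub_image m P : zmod_sub P -> zmod_sub (mulrn_image m P).
Proof.
move=> hP; split; first by exists 0; rewrite ?mul0rn //; apply: hP.1.
by move=> _ _ [x Px ->] [y Py ->]; exists (x - y); rewrite ?mulrnBl //; apply: hP.2.
Qed.

Lemma zmod_sub_kernel m P : zmod_sub P -> zmod_sub (mulrn_kernel m P).
Proof.
move=> hP; split; first by split; [apply: hP.1 | rewrite mul0rn].
by move=> x y [Px px0] [Py py0]; split; [apply: hP.2 | rewrite mulrnBl px0 py0 subrr].
Qed.

End Subgroups.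

Section FiniteSubgroups.
Variable V : finZmodType.
Implicit Types (P Q : V -> Prop) (x y : V).

Definition set_of P : {set V} := [set x | `[< P x >]].

Lemma mem_set_of P x : reflect (P x) (x \in set_of P).
Proof. by rewrite inE; apply: asboolP. Qed.

Lemma set_of_true : set_of (fun=> True) = [set: V].
Proof. by apply/setP => x; rewrite in_setT; apply/mem_set_of. Qed.

Lemma set_of_ext P Q : (forall x, P x <-> Q x) -> set_of P = set_of Q.
Proof. by move=> PQ; apply/setP => x; apply/mem_set_of/mem_set_of => /PQ. Qed.

Lemma set_ofS P Q : incl P Q -> set_of P \subset set_of Q.
Proof. by move=> PQ; apply/subsetP => x /mem_set_of/PQ/mem_set_of. Qed.

Lemma group_set_of P : zmod_sub P -> group_set (set_of P).
Proof.
move=> hP; apply/group_setP; split; first by apply/mem_set_of; apply: hP.1.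
by move=> x y /mem_set_of Px /mem_set_of Py; apply/mem_set_of; apply: zmod_subD.
Qed.

Lemma card_set_of_gt0 P : zmod_sub P -> (0 < #|set_of P|)%N.
Proof. by move=> hP; apply/card_gt0P; exists 0; apply/mem_set_of; apply: hP.1. Qed.

Lemma card_set_of_dvd P Q :
  zmod_sub P -> zmod_sub Q -> incl P Q -> (#|set_of P| %| #|set_of Q|)%N.
Proof.
move=> hP hQ PQ.
exact: (cardSg (G := Group (group_set_of hQ)) (H := Group (group_set_of hP)) (set_ofS PQ)).
Qed.

Lemma incl_card_set_of P Q : incl P Q -> (#|set_of Q| <= #|set_of P|)%N -> incl Q P.
Proof.
move=> PQ leQP; have /eqP eqPQ : set_of P == set_of Q by rewrite eqEcard set_ofS.
by move=> x /mem_set_of; rewrite -eqPQ => /mem_set_of.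
Qed.

Lemma mulrn_card x : x *+ #|V| = 0.
Proof. by rewrite -cardsT -zmodXgE expg_cardG ?inE. Qed.

Lemma mulrn_morphism m :
  {in [set: V] &, {morph (fun x : V => x *+ m) : x y / (x * y)%g}}.
Proof. by move=> x y _ _ /=; rewrite !zmodMgE mulrnDl. Qed.

Lemma card_mulrn_image_kernel m P : zmod_sub P ->
  #|set_of P| = (#|set_of (mulrn_image m P)| * #|set_of (mulrn_kernel m P)|)%N.
Proof.
move=> hP; pose f := Morphism (mulrn_morphism m); have gG := group_set_of hP.
have imG : (f @* Group gG)%g = set_of (mulrn_image m P).
  rewrite morphimEsub ?subsetT //; apply/setP => y; apply/imsetP/mem_set_of.
    by case=> x /mem_set_of Px ->; exists x.
  by case=> x Px ->; exists x => //; apply/mem_set_of.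
have kerG : (Group gG :&: 'ker f)%g = set_of (mulrn_kernel m P).
  apply/setP => x; rewrite !inE /=; apply/andP/asboolP.
    by case=> /asboolP Px /eqP pmx.
  by case=> Px pmx; split; [apply/asboolP | apply/eqP].
rewrite -imG -kerG card_morphim setTI -indexgI mulnC.
by rewrite (Lagrange (subsetIl _ _)).
Qed.

Variables p n : nat.
Hypotheses (p_pr : prime p) (cardV : #|V| = (p ^ n)%N).

Lemma card_set_of_pow P : zmod_sub P -> exists k, #|set_of P| = (p ^ k)%N.
Proof.
move=> hP; have /(dvdn_pfactor _ _ p_pr)[k _ ->] : (#|set_of P| %| p ^ n)%N.
  by rewrite -cardV -cardsT -set_of_true card_set_of_dvd.
by exists k.
Qed.

Lemma card_set_of_proper P Q x : zmod_sub P -> zmod_sub Q -> incl P Q ->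
  Q x -> ~ P x -> (p * #|set_of P| <= #|set_of Q|)%N.
Proof.
move=> hP hQ PQ Qx nPx.
have lt_PQ : (#|set_of P| < #|set_of Q|)%N.
  apply: proper_card; rewrite properE set_ofS //=.
  by apply/subsetPn; exists x; apply/mem_set_of.
have [a cardP] := card_set_of_pow hP; have [b cardQ] := card_set_of_pow hQ.
by move: lt_PQ; rewrite cardP cardQ -expnS ltn_exp2l ?leq_exp2l ?prime_gt1.
Qed.

(* 1 - p z is invertible modulo p^n: (1 - u)(1 + u + ... + u^(n-1)) = 1 - u^n
   for u = p z, and a u^n = 0. *)
Lemma zmod_sub_mulz_1Bp P a z : zmod_sub P -> P (a *~ (1 - p%:Z * z)) -> P a.
Proof.
move=> hP Pa; set u := p%:Z * z.
have Pu m : P (a *~ (1 - u ^+ m)).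
  elim: m => [|m IHm]; first by rewrite expr0 subrr mulr0z; apply: hP.1.
  have -> : 1 - u ^+ m.+1 = (1 - u) + (1 - u ^+ m) * u.
    by rewrite mulrBl mul1r -exprSr addrA subrK.
  by rewrite mulrzDr mulrzA; apply: zmod_subD => //; apply: zmod_subMz.
have := Pu n; rewrite /u exprMn -rmorphXn mulrzBr mulr1z mulrzA -pmulrn.
by rewrite natrXE -cardV mulrn_card mul0rz subr0.
Qed.

Lemma sum_zmultiples_full P : zmod_sub P -> (#|V| <= p * #|set_of P|)%N ->
  exists x, forall v, sum_pred (zmultiples x) P v.
Proof.
move=> hP cardP; have [PT | /not_incl_ex[x _ nPx]] := pselect (incl (fun=> True) P).
  by exists 0 => v; apply: sum_predr; [apply: zmod_sub_zmultiples | apply: PT].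
have hQ := zmod_sub_sum (zmod_sub_zmultiples x) hP.
exists x => v.
apply: (incl_card_set_of (P := sum_pred (zmultiples x) P) (Q := fun=> True)) => //.
rewrite set_of_true cardsT; apply: leq_trans cardP _.
apply: (card_set_of_proper hP hQ (x := x)) => //.
  by move=> y; apply: sum_predr; apply: zmod_sub_zmultiples.
by apply: sum_predl => //; apply: zmultiples_id.
Qed.

End FiniteSubgroups.

Section LieRing.
Variables (V : zmodType) (br : V -> V -> V).
Hypothesis hL : is_lie_bracket br.
Implicit Types (I P : V -> Prop) (a b c : V).

Lemma brDl a b c : br (a + b) c = br a c + br b c. Proof. by case: hL. Qed.
Lemma brDr a b c : br a (b + c) = br a b + br a c. Proof. by case: hL. Qed.
Lemma braa a : br a a = 0. Proof. by case: hL. Qed.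

Lemma br0l c : br 0 c = 0.
Proof. by apply: (addrI (br 0 c)); rewrite -brDl !addr0. Qed.

Lemma brNl a c : br (- a) c = - br a c.
Proof. by apply: (addrI (br a c)); rewrite -brDl !subrr br0l. Qed.

Lemma brC a b : br a b = - br b a.
Proof.
apply/eqP; rewrite -addr_eq0; apply/eqP.
by have := braa (a + b); rewrite brDl !brDr !braa add0r addr0.
Qed.

Lemma brMnl a c m : br (a *+ m) c = br a c *+ m.
Proof. by elim: m => [|m IHm]; rewrite ?br0l // !mulrS brDl IHm. Qed.

Lemma brMzl a c z : br (a *~ z) c = br a c *~ z.
Proof.
by case: z => m; rewrite ?NegzE ?mulrNz ?brNl brMnl.
Qed.

Lemma brMzr a c z : br c (a *~ z) = br c a *~ z.
Proof. by rewrite brC brMzl -mulNrz -brC. Qed.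

Definition ideal I := zmod_sub I /\ forall a b, I a -> I (br a b).

Lemma ideal0 : ideal (fun y => y = 0).
Proof. by split; [apply: zmod_sub0 | move=> a b ->; rewrite br0l]. Qed.

Lemma ideal_mulrn_image m I : ideal I -> ideal (mulrn_image m I).
Proof.
case=> hI brI; split; first exact: zmod_sub_image.
by move=> _ b [a Ia ->]; exists (br a b); [apply: brI | rewrite brMnl].
Qed.

Lemma ideal_mulrn_kernel m I : ideal I -> ideal (mulrn_kernel m I).
Proof.
case=> hI brI; split; first exact: zmod_sub_kernel.
by move=> a b [Ia ma0]; split; [apply: brI | rewrite -brMnl ma0 br0l].
Qed.

Lemma add_span_min (S : V -> Prop) P : zmod_sub P -> incl S P -> incl (add_span S) P.
Proof.
by move=> hP SP x; elim=> [y /SP | | y z _ Py _ Pz] //; [apply: hP.1 | apply: hP.2].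
Qed.

Local Notation γ := (lcs_aux br).

Lemma zmod_sub_lcs_aux k : zmod_sub (γ k).
Proof.
case: k => [|k] /=; first by [].
by split=> [|x y]; [apply: add_span0 | apply: add_span_sub].
Qed.

Lemma lcs_aux_brl k a b : γ k a -> γ k.+1 (br a b).
Proof. by move=> ka; apply: add_span_gen; exists a, b. Qed.

Lemma lcs_aux_succ k : incl (γ k.+1) (γ k).
Proof.
elim: k => [//|k IHk]; apply: add_span_min; first exact: zmod_sub_lcs_aux.
by move=> _ [a [b [ka ->]]]; apply/lcs_aux_brl/IHk.
Qed.

Lemma lcs_aux_decr i j : (i <= j)%N -> incl (γ j) (γ i).
Proof.
move=> /subnK <-; elim: (j - i)%N => [//|t IHt] x.
by rewrite addSn => /lcs_aux_succ/IHt.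
Qed.

Lemma sum_lcs_aux_brl I k s c :
  ideal I -> sum_pred I (γ k) s -> sum_pred I (γ k.+1) (br s c).
Proof.
case=> _ brI [u [w [Iu kw ->]]]; exists (br u c), (br w c).
by rewrite brDl; split; [apply: brI | apply: lcs_aux_brl |].
Qed.

Lemma sum_lcs_aux_brr I k s c :
  ideal I -> sum_pred I (γ k) s -> sum_pred I (γ k.+1) (br c s).
Proof.
move=> hI ks; rewrite brC; apply: zmod_subN; last exact: sum_lcs_aux_brl.
exact: zmod_sub_sum hI.1 (zmod_sub_lcs_aux _).
Qed.

Lemma lcs_aux_sum_succ I j k : ideal I ->
  incl (γ k) (sum_pred I (γ j)) -> incl (γ k.+1) (sum_pred I (γ j.+1)).
Proof.
move=> hI kIj; apply: add_span_min; first exact: zmod_sub_sum hI.1 (zmod_sub_lcs_aux _).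
by move=> _ [a [b [ka ->]]]; apply/sum_lcs_aux_brl/kIj.
Qed.

Lemma lcs_aux_succ_mulrn m j : incl (γ j) (mulrn_image m (γ 0)) ->
  incl (γ j.+1) (mulrn_image m (γ 1)).
Proof.
move=> jm; apply: add_span_min; first exact/zmod_sub_image/zmod_sub_lcs_aux.
move=> _ [_ [c [/jm[a _ ->] ->]]].
by exists (br a c); [apply: (@lcs_aux_brl 0) | rewrite brMnl].
Qed.

Variable D : nat.
Hypothesis lcs_aux_nil : forall x, γ D x -> x = 0.

Lemma lcs_aux_sub_ideal I k : ideal I ->
  incl (γ k) (sum_pred I (γ k.+1)) -> incl (γ k) I.
Proof.
move=> hI kI.
have kIt t : incl (γ k) (sum_pred I (γ (k.+1 + t))).
  elim: t => [|t IHt]; first by rewrite addn0.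
  move=> _ /kI[u [w [Iu kw ->]]].
  have [u' [w' [Iu' tw' ->]]] := lcs_aux_sum_succ hI IHt kw.
  exists (u + u'), w'; rewrite addrA addnS; split=> //.
  exact: zmod_subD hI.1 Iu Iu'.
move=> _ /(kIt D)[u [w [Iu Dw ->]]].
by rewrite (lcs_aux_nil (lcs_aux_decr (leq_addl _ _) Dw)) addr0.
Qed.

(* Writing a = x z + s and b = x z' + t with s, t in I + L^2, [x, x] = 0
   gives [a, b] = z [x, t] + [s, b], which lies in I + L^3. *)
Lemma lcs_aux1_sub_ideal I x : ideal I ->
  (forall v, sum_pred (zmultiples x) (sum_pred I (γ 1)) v) -> incl (γ 1) I.
Proof.
move=> hI cyc; apply: (lcs_aux_sub_ideal hI).
have hI2 := zmod_sub_sum hI.1 (zmod_sub_lcs_aux 2).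
apply: add_span_min => // _ [a [b [_ ->]]].
have [_ [s [[z ->] Is ->]]] := cyc a; have [_ [t [[z' ->] It ->]]] := cyc b.
rewrite brDl brMzl brDr brMzr braa mul0rz add0r.
apply: zmod_subD => //; last exact: sum_lcs_aux_brl.
by apply: zmod_subMz => //; apply: sum_lcs_aux_brr.
Qed.

End LieRing.

Section MaximalClass.
Variables (V : finZmodType) (br : V -> V -> V) (p d : nat).
Hypotheses (hL : is_lie_bracket br) (p_pr : prime p) (d_gt0 : (0 < d)%N).
Hypothesis cardV : #|V| = (p ^ d.+2)%N.
(* γ k is L^(k+1) and n = d + 2, so L^(n-1) = γ d and L^n = γ (d + 1). *)
Local Notation γ := (lcs_aux br).
Hypothesis lcs_aux_nil : forall x, γ d.+1 x -> x = 0.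
Variable x0 : V.
Hypotheses (x0_lcs : γ d x0) (x0_neq0 : x0 <> 0).

Local Notation e k := #|set_of (γ k)|.
Local Notation pL := (mulrn_image p (γ 0)).
Local Notation Lp := (mulrn_kernel p (γ 0)).

Lemma lcs_aux_proper k : (k <= d)%N -> exists2 x, γ k x & ~ γ k.+1 x.
Proof.
move=> le_kd; apply: not_incl_ex => k_sub; apply: x0_neq0.
have k0 : incl (γ k) (fun y => y = 0).
  apply: (lcs_aux_sub_ideal hL lcs_aux_nil (ideal0 hL)) => x /k_sub.
  by apply: sum_predr; apply: zmod_sub0.
exact/k0/(lcs_aux_decr le_kd).
Qed.

Lemma lcs_aux0_not_cyclic x : ~ (forall v, sum_pred (zmultiples x) (γ 1) v).
Proof.
move=> cyc; apply: x0_neq0.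
have L2_0 := lcs_aux1_sub_ideal hL lcs_aux_nil (ideal0 hL) (x := x).
apply/L2_0/(lcs_aux_decr d_gt0) => // v.
apply: sum_predS (cyc v) => // y; apply: sum_predr; exact: zmod_sub0.
Qed.

Lemma card_lcs_aux_succ k : (k <= d)%N -> (p * e k.+1 <= e k)%N.
Proof.
move=> /lcs_aux_proper[x kx nk1x].
apply: (card_set_of_proper p_pr cardV (x := x)) => //;
  by [apply: zmod_sub_lcs_aux | apply: lcs_aux_succ].
Qed.

Lemma card_lcs_aux0_ge : (p ^ 2 * e 1 <= e 0)%N.
Proof.
have [x _ n1x] := lcs_aux_proper (leq0n d).
have h1 := zmod_sub_lcs_aux br 1; have hQ := zmod_sub_sum (zmod_sub_zmultiples x) h1.
have [v nQv] : exists v, ~ sum_pred (zmultiples x) (γ 1) v.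
  exact/existsNP/lcs_aux0_not_cyclic.
rewrite expnS -mulnA; apply: leq_trans (card_set_of_proper p_pr cardV hQ _ _ _ nQv) => //.
rewrite leq_pmul2l ?prime_gt0 //.
apply: (card_set_of_proper p_pr cardV h1 hQ (x := x)) => //.
  by move=> y; apply: sum_predr; apply: zmod_sub_zmultiples.
by apply: sum_predl => //; apply: zmultiples_id.
Qed.

Lemma card_lcs_aux_chain i j : (i <= j <= d.+1)%N -> (p ^ (j - i) * e j <= e i)%N.
Proof.
move=> /andP[]; elim: j => [|j IHj]; first by rewrite leqn0 => /eqP -> _; rewrite mul1n.
rewrite leq_eqVlt => /predU1P[<- _ | lt_ij le_jd]; first by rewrite subnn mul1n.
rewrite subSn // expnS -mulnA mulnCA; apply: leq_trans (IHj lt_ij (ltnW le_jd)).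
by rewrite leq_pmul2l ?expn_gt0 ?prime_gt0 ?card_lcs_aux_succ.
Qed.

Lemma card_lcs_aux k : (1 <= k <= d.+1)%N -> e k = (p ^ (d.+1 - k))%N.
Proof.
case/andP=> k_gt0 le_kd; have p_gt0 := prime_gt0 p_pr.
have e_last : e d.+1 = 1%N.
  rewrite -(cards1 (0 : V)); congr #|pred_of_set _|; apply/setP => y; rewrite [RHS]inE.
  by apply/mem_set_of/eqP => [/lcs_aux_nil | ->] //; apply: (zmod_sub_lcs_aux _ _).1.
apply/eqP; rewrite eqn_leq; apply/andP; split; last first.
  by have := card_lcs_aux_chain (i := k) (j := d.+1); rewrite le_kd leqnn e_last muln1; apply.
have : (p ^ k.+1 * e k <= p ^ d.+2)%N.
  rewrite -cardV -cardsT -set_of_true; apply: leq_trans card_lcs_aux0_ge.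
  have -> : (p ^ k.+1 = p ^ 2 * p ^ (k - 1))%N by rewrite -expnD; congr (_ ^ _)%N; lia.
  rewrite -mulnA leq_pmul2l ?expn_gt0 ?p_gt0 //.
  by apply: card_lcs_aux_chain; rewrite k_gt0 le_kd.
have -> : (p ^ d.+2 = p ^ k.+1 * p ^ (d.+1 - k))%N by rewrite -expnD; congr (_ ^ _)%N; lia.
by rewrite leq_pmul2l ?expn_gt0 ?p_gt0.
Qed.

Lemma card_lcs_aux0 : e 0 = (p ^ 2 * e 1)%N.
Proof.
rewrite (card_lcs_aux (k := 1)) ?d_gt0 // set_of_true cardsT cardV -expnD.
by congr (_ ^ _)%N; lia.
Qed.

Lemma card_lcs_aux_index k : (1 <= k <= d)%N -> e k = (p * e k.+1)%N.
Proof.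
case/andP=> k_gt0 le_kd.
rewrite (card_lcs_aux (k := k)) ?k_gt0 ?(leqW le_kd) //.
rewrite (card_lcs_aux (k := k.+1)) ?le_kd // -expnS; congr (_ ^ _)%N; lia.
Qed.

Lemma pmul_lcs_aux1 a : γ 1 (a *+ p).
Proof.
apply: contrapT => n1pa; apply: (lcs_aux0_not_cyclic (x := a)) => v.
have h1 := zmod_sub_lcs_aux br 1.
have hQ (x : V) := zmod_sub_sum (zmod_sub_zmultiples x) h1.
have Q1_gt : (p * e 1 <= #|set_of (sum_pred (zmultiples (a *+ p)) (γ 1))|)%N.
  apply: (card_set_of_proper p_pr cardV h1 (hQ _) (x := a *+ p)) => //.
    by move=> y; apply: sum_predr; apply: zmod_sub_zmultiples.
  by apply: sum_predl => //; apply: zmultiples_id.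
have nQ1a : ~ sum_pred (zmultiples (a *+ p)) (γ 1) a.
  case=> _ [w [[z ->] n1w ea]]; apply/n1pa/(zmod_subMn _ h1).
  apply: (zmod_sub_mulz_1Bp cardV (z := z) h1).
  by rewrite mulrzBr mulr1z mulrzA -pmulrn {1}ea addrC addKr.
have Q2_ge : (p * #|set_of (sum_pred (zmultiples (a *+ p)) (γ 1))|
              <= #|set_of (sum_pred (zmultiples a) (γ 1))|)%N.
  apply: (card_set_of_proper p_pr cardV (hQ _) (hQ _) (x := a)) => //.
    by apply: sum_predS => //; apply: zmultiples_mulrn.
  by apply: sum_predl => //; apply: zmultiples_id.
apply: (incl_card_set_of (P := sum_pred (zmultiples a) (γ 1)) (Q := γ 0)) => //.
rewrite card_lcs_aux0 expnS expn1 -mulnA; apply: leq_trans Q2_ge.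
by rewrite leq_pmul2l ?prime_gt0.
Qed.

Lemma lcs_aux_sub_ideal_index I k : ideal br I -> (1 <= k <= d)%N ->
  incl I (γ k) -> ~ incl I (γ k.+1) -> incl (γ k) I.
Proof.
move=> hI k_range kI /not_incl_ex[y Iy nk1y].
have hk1 := zmod_sub_lcs_aux br k.+1; have hM := zmod_sub_sum hI.1 hk1.
apply: (lcs_aux_sub_ideal hL lcs_aux_nil hI).
apply: (incl_card_set_of (P := sum_pred I (γ k.+1))).
  move=> _ [u [w [Iu k1w ->]]].
  exact: zmod_subD (zmod_sub_lcs_aux _ _) (kI _ Iu) (lcs_aux_succ k1w).
rewrite card_lcs_aux_index //.
apply: (card_set_of_proper p_pr cardV hk1 hM (x := y)) => //.
  by move=> z; apply: sum_predr hI.1.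
exact: sum_predl.
Qed.

Lemma ideal_lcs_aux_descent I k : ideal br I -> incl I (γ 1) -> (1 <= k <= d)%N ->
  incl I (γ k) \/ exists2 j, (1 <= j < k)%N & incl (γ j) I /\ incl I (γ j).
Proof.
move=> hI I1; elim: k => [//|k IHk] /andP[_ le_kd].
have [-> | k_gt0] := posnP k; first by left.
have k_range : (1 <= k <= d)%N by rewrite k_gt0 (ltnW le_kd).
have [kI | [j /andP[j_gt0 lt_jk] jI]] := IHk k_range; last first.
  by right; exists j; rewrite // j_gt0 ltnS ltnW.
have [k1I | nk1I] := pselect (incl I (γ k.+1)); first by left.
right; exists k; first by rewrite k_gt0 ltnSn.
by split=> //; apply: lcs_aux_sub_ideal_index.
Qed.

Lemma kernel_not_sub_lcs_aux1 j : (1 <= j < d)%N ->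
  incl (γ j) pL -> incl pL (γ j) -> ~ incl Lp (γ 1).
Proof.
move=> /andP[j_gt0 lt_jd] jpL pLj Lp1.
have h0 := zmod_sub_lcs_aux br 0; have h1 := zmod_sub_lcs_aux br 1.
have card_pL : #|set_of pL| = e j by rewrite (set_of_ext (fun x => conj (@pLj x) (@jpL x))).
have card_L1p : #|set_of (mulrn_kernel p (γ 1))| = #|set_of Lp|.
  rewrite (@set_of_ext _ _ Lp) // => x.
  by split=> [[_ px0] // | Lpx]; split; [apply: Lp1 | apply: Lpx.2].
have pL1_ge : (e j.+1 <= #|set_of (mulrn_image p (γ 1))|)%N.
  by apply/subset_leq_card/set_ofS/lcs_aux_succ_mulrn.
have j_range : (1 <= j <= d)%N by rewrite j_gt0 (ltnW lt_jd).
have := card_mulrn_image_kernel p h0; have := card_mulrn_image_kernel p h1.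
rewrite card_L1p card_pL card_lcs_aux0 (card_lcs_aux_index j_range) => ->.
rewrite expnS expn1 -mulnA -(mulnA p) => /eqP.
rewrite eqn_pmul2l ?prime_gt0 // => /eqP eq_card.
have : (e j.+1 * #|set_of Lp| < p * (#|set_of (mulrn_image p (γ 1))| * #|set_of Lp|))%N.
  apply: leq_ltn_trans (ltn_Pmull (prime_gt1 p_pr) _); first by rewrite leq_mul2r pL1_ge orbT.
  rewrite muln_gt0 (card_set_of_gt0 (zmod_sub_image p h1)).
  exact: card_set_of_gt0 (zmod_sub_kernel p h0).
by rewrite eq_card ltnn.
Qed.

Lemma lcs_aux1_sub_kernel : ~ incl Lp (γ 1) -> incl (γ 1) Lp.
Proof.
move=> /not_incl_ex[y Lpy n1y].
have hLp : ideal br Lp by apply: ideal_mulrn_kernel => //; split=> //; apply: zmod_sub_lcs_aux.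
have h1 := zmod_sub_lcs_aux br 1; have hM := zmod_sub_sum hLp.1 h1.
have [x cyc] : exists x, forall v, sum_pred (zmultiples x) (sum_pred Lp (γ 1)) v.
  apply: (sum_zmultiples_full p_pr cardV hM).
  rewrite -cardsT -set_of_true card_lcs_aux0 expnS expn1 -mulnA leq_pmul2l ?prime_gt0 //.
  apply: (card_set_of_proper p_pr cardV h1 hM (x := y)) => //; last exact: sum_predl.
  by move=> z; apply: sum_predr hLp.1.
exact: (lcs_aux1_sub_ideal hL lcs_aux_nil hLp cyc).
Qed.

Lemma lcs_aux_pmul a : γ d (a *+ p).
Proof.
have hpL : ideal br pL by apply: ideal_mulrn_image => //; split=> //; apply: zmod_sub_lcs_aux.
have pL1 : incl pL (γ 1) by move=> _ [b _ ->]; apply: pmul_lcs_aux1.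
have d_range : (1 <= d <= d)%N by rewrite d_gt0 leqnn.
have [pLd | [j j_range [jpL pLj]]] := ideal_lcs_aux_descent hpL pL1 d_range.
  by apply: pLd; exists a.
have L1Lp := lcs_aux1_sub_kernel (kernel_not_sub_lcs_aux1 j_range jpL pLj).
case/andP: j_range => _ lt_jd; case: x0_neq0.
have [c /L1Lp[_ pc0] ->] := lcs_aux_succ_mulrn hL jpL (lcs_aux_decr lt_jd x0_lcs).
exact: pc0.
Qed.

End MaximalClass.

Theorem lemma2 (p n : nat) (V : finZmodType) (br : V -> V -> V) :
  prime p -> (3 <= n)%N -> is_lie_bracket br ->
  #|V| = (p ^ n)%N -> nil_class br n.-1 ->
  forall a : V, lcs br n.-1 (a *+ p).
Proof.
move=> p_pr n_ge3 hL cardV [lcs_nil [x0 [x0_lcs x0_neq0]]] a.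
case: n n_ge3 cardV lcs_nil x0_lcs => [|[|d]] // d_gt0 cardV lcs_nil x0_lcs.
exact: (lcs_aux_pmul hL p_pr d_gt0 cardV lcs_nil x0_lcs x0_neq0).
Qed.
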